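(* Let $0\le R'\le (1-p)^{|\mathcal E|}$ and let $M\ge1$ be an integer. Then, in the symmetric-erasure retransmission model described in the context, $$P\Big(\min_{v\in\mathcal V} n_v(M) < R'M\Big)\;\le\; N\,2^{-M\,D\left(R',(1-p)^{|\mathcal E|}\right)} .$$ In particular, for every $R'<(1-p)^{|\mathcal E|}$ this probability decays exponentially in $M$ (for every $p<1$).
   Context: Let $\mathcal G=(\mathcal V,\mathcal E)$ be a finite connected undirected simple graph with $N=|\mathcal V|$ vertices and maximum degree $\Delta$; $\mathcal N_v$ denotes the set of neighbours of $v$. Fix an erasure probability $p\in[0,1]$. Erasures are symmetric: for every undirected edge $e\in\mathcal E$ and every round $t\ge 1$ there is a random variable $S^e_t\in\{0,1\}$ with $P(S^e_t=1)=1-p$ ($S^e_t=1$ means the edge works in round $t$, $S^e_t=0$ means the packets in both directions on $e$ are erased in round $t$), and all these variables are mutually independent. The retransmission protocol for distributed consensus is described by integer state variables $n_{vu}(t)$, for every ordered pair $(v,u)$ with $u\in\mathcal N_v$ and every $t\ge 0$ (the index of the latest iterate of node $u$ available at node $v$ after round $t$), together with $n_v(t)=1+\min_{u\in\mathcal N_v} n_{vu}(t)$ (the number of iterations of the consensus update $x^v_{k+1}=x^v_k-\epsilon\sum_{u\in\mathcal N_v}(x^v_k-x^u_k)$ that node $v$ has completed after round $t$). Initially $n_{vu}(0)=-1$ for all such pairs (so $n_v(0)=0$), and for all $t\ge 0$ $$n_{vu}(t+1)=n_{vu}(t)+S^{\{u,v\}}_{t+1}\cdot\mathbf 1\{n_u(t)>n_{vu}(t)\}.$$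 Node $u$ is said to transmit a ''wait'' to node $v$ in round $t+1$ iff $n_{vu}(t)=n_u(t)$. $D(q,p)=q\log_2\frac qp+(1-q)\log_2\frac{1-q}{1-p}$ is the binary Kullback–Leibler divergence (with $0\log 0=0$). *)

From mathcomp Require Import all_boot.
From Stdlib Require Import Reals ZArith.

Set Implicit Arguments.
Unset Strict Implicit.
Unset Printing Implicit Defensive.

Section Model.
Variable T : finType.
Variable adj : rel T.

Definition is_edge (e : {set T}) : bool :=
  [exists u, exists v, adj u v && (e == [set u; v])].
Definition Edge : finType := {e : {set T} | is_edge e}.

Definition nedges : nat := #|{: Edge}|.

(* finite outcome space of the erasure variables for rounds 1..M:
   s (t, e) = S^e_{t+1} for t : 'I_M *)
Definition Omega (M : nat) : finType := {ffun ('I_M * Edge)%type -> bool}.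

Definition weight (p : R) (M : nat) (s : Omega M) : R :=
  \big[Rmult/1%R]_(i : ('I_M * Edge)%type) (if s i then (1 - p)%R else p).

Definition Prob (p : R) (M : nat) (A : pred (Omega M)) : R :=
  \big[Rplus/0%R]_(s : Omega M) (if A s then weight p s else 0%R).

(* minimum of a nonempty list of integers (0 on the empty list, never used
   on it since every vertex of a connected graph with N >= 2 has a neighbour) *)
Definition minZ (l : seq Z) : Z :=
  match l with [::] => 0%Z | x :: r => foldr Z.min x r end.

Definition nv (n : T -> T -> Z) (v : T) : Z :=
  (1 + minZ [seq n v u | u <- enum T & adj v u])%Z.

(* value of S^{u,v}_{t+1} in outcome s (t < M); false outside the horizon
   or on non-edges (never used there) *)
Definition Sval (M : nat) (s : Omega M) (t : nat) (u v : T) : bool :=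
  match insub t, insub [set u; v] with
  | Some t', Some e => s (t', e)
  | _, _ => false
  end.

Fixpoint nstate (M : nat) (s : Omega M) (t : nat) : T -> T -> Z :=
  match t with
  | 0 => fun _ _ => (-1)%Z
  | t'.+1 =>
      let n := nstate s t' in
      fun v u => (n v u +
                  (if Sval s t' u v && (n v u <? nv n u)%Z then 1 else 0))%Z
  end.

Definition min_nv (M : nat) (s : Omega M) (t : nat) : Z :=
  minZ [seq nv (nstate s t) v | v <- enum T].

End Model.

Definition log2 (x : R) : R := (ln x / ln 2)%R.

(* Binary KL divergence D(q,p) for q,p in [0,1], with 0 log 0 = 0;
   None stands for +infinity (some term a*log2(a/0) with a>0). *)
Definition kl_term (a b : R) : option R :=
  if Req_EM_T a 0 then Some 0%R
  else if Req_EM_T b 0 then None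
  else Some (a * log2 (a / b))%R.

Definition KL (q p : R) : option R :=
  match kl_term q p, kl_term (1 - q) (1 - p) with
  | Some x, Some y => Some (x + y)%R
  | _, _ => None
  end.

(* N * 2^(-M D), read as 0 when D = +infinity *)
Definition chernoff_bound (N M : nat) (D : option R) : R :=
  match D with
  | Some d => (INR N * Rpower 2 (- (INR M) * d))%R
  | None => 0%R
  end.

(* Call a round full when no edge is erased in it.  The proof has a
   deterministic and a probabilistic half.
   - Protocol: in a full round every pending iterate is delivered, so every
     node completes one more iteration; hence n_v(M) >= K for all v, where K
     is the number of full rounds among the first M [full_rounds_le_min_nv].
   - Probability: the rounds are independent and each is full with
     probability q = (1-p)^|E|, so K is Binomial(M, q).  Factorising the
     product measure over rounds [expect_prod_rows] gives the generating
     function E[z^K] = (qz + 1 - q)^M [expect_pow_full_rounds]; the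
     exponential Markov inequality at the optimal tilt [chernoff_tilt] yields
     P(K < R'M) <= 2^{-M D(R',q)} [full_rounds_tail], the degenerate cases
     R' = q, R' = 0 and q = 1 being treated directly.
   The theorem follows because min_v n_v(M) < R'M forces K < R'M. *)

From mathcomp Require Import all_boot.
From Stdlib Require Import Reals ZArith Lra Lia.
From mathcomp Require Import ssrZ Rstruct.

Set Implicit Arguments.
Unset Strict Implicit.
Unset Printing Implicit Defensive.

Lemma minZ_le (l : seq Z) (x : Z) : x \in l -> (minZ l <= x)%Z.
Proof.
case: l => [|y r] //=; elim: r => [|z r IH] /=; first by rewrite inE => /eqP ->; lia.
rewrite !inE => /or3P [xy | /eqP -> | xr]; last 2 first.
- lia.
- by rewrite inE xr orbT in IH; have := IH isT; lia.
by rewrite inE xy in IH; have := IH isT; lia.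
Qed.

Lemma minZ_glb (l : seq Z) (a : Z) :
  l != [::] -> (forall x, x \in l -> (a <= x)%Z) -> (a <= minZ l)%Z.
Proof.
case: l => [|y r] //= _; elim: r => [|z r IH] lb /=; first by apply: lb; rewrite inE.
apply: Z.min_glb; first by apply: lb; rewrite !inE eqxx orbT.
by apply: IH => x; rewrite inE => /orP [xy|xr]; apply: lb; rewrite !inE ?xy ?xr ?orbT.
Qed.

Section Protocol.
Variables (T : finType) (adj : rel T) (M : nat) (s : Omega adj M).
Hypothesis adj_sym : symmetric adj.
Hypothesis has_nbr : forall v, exists u, adj v u.

Lemma nv_le (n : T -> T -> Z) (v u : T) : adj v u -> (nv adj n v <= 1 + n v u)%Z.
Proof.
move=> avu; rewrite /nv; apply: Zplus_le_compat_l; apply: minZ_le.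
by apply: map_f; rewrite mem_filter avu mem_enum.
Qed.

Lemma nv_ge (n : T -> T -> Z) (v : T) (a : Z) :
  (forall u, adj v u -> (a <= n v u)%Z) -> (1 + a <= nv adj n v)%Z.
Proof.
move=> lb; rewrite /nv; apply: Zplus_le_compat_l; apply: minZ_glb.
  have [u avu] := has_nbr v.
  have nvu_in : n v u \in [seq n v w | w <- enum T & adj v w].
    by rewrite map_f // mem_filter avu mem_enum.
  by apply: contraTneq nvu_in => ->.
by move=> x /mapP [u]; rewrite mem_filter => /andP [avu _] ->; apply: lb.
Qed.

Definition full_round (t : nat) : bool :=
  if insub t is Some t' then [forall e, s (t', e)] else false.

Definition full_rounds (t : nat) : nat := \sum_(i < t) full_round i.

Lemma full_round_Sval (t : nat) (u v : T) : full_round t -> adj v u -> Sval s t u v.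
Proof.
rewrite /full_round /Sval; case: (insub t) => [t'|] //= /forallP all_up avu.
case: insubP => [e _ _|]; first exact: all_up.
by case/negP; apply/existsP; exists u; apply/existsP; exists v; rewrite adj_sym avu eqxx.
Qed.

Lemma nstate_mono (t : nat) (v u : T) : (nstate s t v u <= nstate s t.+1 v u)%Z.
Proof. by rewrite /=; case: (_ && _); lia. Qed.

(* In a full round every pending
   packet is delivered, so each node advances by one iteration. *)
Lemma full_rounds_le_nv (t : nat) (v : T) :
  (Z.of_nat (full_rounds t) <= nv adj (nstate s t) v)%Z.
Proof.
elim: t v => [|t IH] v.
  by rewrite /full_rounds big_ord0; apply: (nv_ge (a := (-1)%Z)) => u _ /=; lia.
rewrite /full_rounds big_ord_recr -/(full_rounds t) Nat2Z.inj_add.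
case full_t: (full_round t); last first.
  have -> : (Z.of_nat (full_rounds t) + Z.of_nat false
             = 1 + (Z.of_nat (full_rounds t) - 1))%Z.
    by change (Z.of_nat false) with 0%Z; lia.
  apply: nv_ge => u avu; have := nv_le (n := nstate s t) avu.
  by have := @nstate_mono t v u; have := IH v; lia.
rewrite Z.add_comm; apply: nv_ge => u avu /=; rewrite (full_round_Sval full_t avu) /=.
case: Z.ltb_spec => pending /=; last by have := IH u; lia.
by have := nv_le (n := nstate s t) avu; have := IH v; lia.
Qed.

Lemma full_rounds_le_min_nv (v0 : T) : (Z.of_nat (full_rounds M) <= min_nv s M)%Z.
Proof.
rewrite /min_nv; apply: minZ_glb => [|x /mapP [v _ ->]]; last exact: full_rounds_le_nv.
by rewrite -size_eq0 size_map -cardE -lt0n; apply/card_gt0P; exists v0.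
Qed.

End Protocol.

Local Open Scope R_scope.

Lemma prod_const_pow (I : finType) (c : R) : \big[Rmult/1]_(i : I) c = c ^ #|I|.
Proof. by rewrite big_const; elim: #|I| => //= n ->. Qed.

Lemma prod_if_pow (n : nat) (P : 'I_n -> bool) (z : R) :
  \big[Rmult/1]_(i < n) (if P i then z else 1) = z ^ (\sum_(i < n) P i)%nat.
Proof.
elim: n P => [|n IH] P; first by rewrite !big_ord0.
by rewrite !big_ord_recr /= IH pow_add; case: (P ord_max) => /=; ring.
Qed.

Section ProductSpace.
Variables (I J : finType) (w : bool -> R).

Definition row (s : {ffun I * J -> bool}) (i : I) : {ffun J -> bool} :=
  [ffun j => s (i, j)].

Lemma expect_prod_rows (F : {ffun J -> bool} -> R) :
  \big[Rplus/0]_(s : {ffun I * J -> bool})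
     (\big[Rmult/1]_x w (s x) * \big[Rmult/1]_i F (row s i))
  = (\big[Rplus/0]_(g : {ffun J -> bool}) (\big[Rmult/1]_j w (g j) * F g)) ^ #|I|.
Proof.
pose glue (G : {ffun I -> {ffun J -> bool}}) : {ffun I * J -> bool} :=
  [ffun x => G x.1 x.2].
have row_glue G i : row (glue G) i = G i by apply/ffunP => j; rewrite !ffunE.
rewrite (reindex glue) /=; last first.
  apply: onW_bij; exists (fun s => [ffun i => row s i]) => [G|s].
    by apply/ffunP => i; rewrite ffunE row_glue.
  by apply/ffunP => -[i j]; rewrite !ffunE.
rewrite -prod_const_pow.
rewrite (bigA_distr_bigA (fun (_ : I) (g : {ffun J -> bool}) => \big[Rmult/1]_j w (g j) * F g)).
apply: eq_bigr => G _; rewrite big_split /=.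
congr (_ * _); last by apply: eq_bigr => i _; rewrite row_glue.
rewrite (eq_bigr (fun x => w (G x.1 x.2))) => [|x _]; last by rewrite ffunE.
by rewrite -(pair_bigA _ (fun i j => w (G i j))).
Qed.

Lemma expect_all_true (z1 z0 : R) : w true + w false = 1 ->
  \big[Rplus/0]_(g : {ffun J -> bool})
     (\big[Rmult/1]_j w (g j) * (if [forall j, g j] then z1 else z0))
  = w true ^ #|J| * z1 + (1 - w true ^ #|J|) * z0.
Proof.
move=> w_total.
have split_if (g : {ffun J -> bool}) :
    \big[Rmult/1]_j w (g j) * (if [forall j, g j] then z1 else z0)
    = \big[Rmult/1]_j w (g j) * z0
      + (if g == [ffun=> true] then \big[Rmult/1]_j w (g j) * (z1 - z0) else 0).
  have -> : [forall j, g j] = (g == [ffun=> true]).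
    apply/forallP/eqP => [all_g | ->]; last by move=> j; rewrite ffunE.
    by apply/ffunP => j; rewrite ffunE all_g.
  by case: eqP => _; ring.
rewrite (eq_bigr _ (fun g _ => split_if g)) big_split /= -big_mkcond big_pred1_eq.
rewrite -big_distrl /= -(bigA_distr_bigA (fun (_ : J) b => w b)) /=.
rewrite (eq_bigr (fun _ => 1)) => [|j _]; last by rewrite big_bool.
have -> : \big[Rmult/1]_(j : J) w ([ffun=> true] j) = w true ^ #|J|.
  by rewrite -prod_const_pow; apply: eq_bigr => j _; rewrite ffunE.
by rewrite prod_const_pow pow1; move: (w true ^ #|J|) => c; ring.
Qed.

End ProductSpace.

Lemma prod_indicator (I : finType) (P : pred I) :
  \big[Rmult/1]_i (if P i then 1 else 0) = if [forall i, P i] then 1 else 0.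
Proof.
case: (boolP [forall i, P i]) => [/forallP all_P | /forallPn [i not_Pi]].
  by apply: big1 => i _; rewrite all_P.
by rewrite (bigD1 i) //= (negbTE not_Pi) Rmult_0_l.
Qed.

Section Erasures.
Variables (T : finType) (adj : rel T) (p : R) (M : nat).
Hypotheses (p_ge0 : 0 <= p) (p_le1 : p <= 1).

Local Notation q := ((1 - p) ^ nedges adj).

Lemma weight_ge0 (s : Omega adj M) : 0 <= weight p s.
Proof.
apply: (big_ind (fun x => 0 <= x)) => [|x y|i _]; [lra | nra | by case: (s i); lra].
Qed.

Lemma Prob_le_expect (A : pred (Omega adj M)) (g : Omega adj M -> R) :
  (forall s, 0 <= g s) -> (forall s, A s -> 1 <= g s) ->
  Prob p A <= \big[Rplus/0]_s (weight p s * g s).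
Proof.
move=> g_ge0 g_ge1; apply: (big_ind2 (fun x y => x <= y)) => [|x1 y1 x2 y2|s _].
- lra.
- lra.
have := weight_ge0 s; have := g_ge0 s.
by case: ifP => [/g_ge1|_]; nra.
Qed.

(* The rounds are the rows of the outcome array: they are independent and
   each is full with probability [q]. *)
Lemma expect_full_rounds (z1 z0 : R) :
  \big[Rplus/0]_(s : Omega adj M)
     (weight p s * \big[Rmult/1]_(t < M) (if full_round s t then z1 else z0))
  = (q * z1 + (1 - q) * z0) ^ M.
Proof.
pose erasure (b : bool) := if b then 1 - p else p.
pose reward (g : {ffun Edge adj -> bool}) := if [forall e, g e] then z1 else z0.
transitivity (\big[Rplus/0]_(s : Omega adj M)
    (\big[Rmult/1]_x erasure (s x) * \big[Rmult/1]_t reward (row s t))).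
  apply: eq_bigr => s _; congr (_ * _); apply: eq_bigr => t _.
  rewrite /reward /full_round valK; congr (if _ then _ else _).
  by apply: eq_forallb => e; rewrite ffunE.
by rewrite expect_prod_rows card_ord expect_all_true /erasure /=; last ring.
Qed.

Lemma total_weight : \big[Rplus/0]_(s : Omega adj M) weight p s = 1.
Proof.
have := expect_full_rounds 1 1; rewrite !Rmult_1_r Rplus_minus pow1 => <-.
by apply: eq_bigr => s _; rewrite big1 ?Rmult_1_r // => t _; case: ifP.
Qed.

Lemma expect_pow_full_rounds (z : R) :
  \big[Rplus/0]_(s : Omega adj M) (weight p s * z ^ full_rounds s M)
  = (q * z + (1 - q)) ^ M.
Proof.
rewrite -[1 - q]Rmult_1_r -expect_full_rounds.
by apply: eq_bigr => s _; rewrite prod_if_pow.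
Qed.

Lemma expect_all_full :
  \big[Rplus/0]_(s : Omega adj M)
     (weight p s * if [forall t : 'I_M, full_round s t] then 1 else 0) = q ^ M.
Proof.
have := expect_full_rounds 1 0; rewrite Rmult_0_r Rplus_0_r Rmult_1_r => <-.
by apply: eq_bigr => s _; rewrite prod_indicator.
Qed.

Lemma tail_le_one (A : pred (Omega adj M)) : Prob p A <= 1.
Proof.
apply: Rle_trans (Prob_le_expect (g := fun _ => 1) _ _) _ => [s|s _|]; try lra.
by rewrite -[X in _ <= X]total_weight; right; apply: eq_bigr => s _; rewrite Rmult_1_r.
Qed.

Lemma tail_all_full (A : pred (Omega adj M)) :
  (forall s, A s -> (full_rounds s M < M)%nat) -> Prob p A <= 1 - q ^ M.
Proof.
move=> few_full.
pose all_full (s : Omega adj M) := if [forall t : 'I_M, full_round s t] then 1 else 0.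
apply: Rle_trans (Prob_le_expect (g := fun s => 1 - all_full s) _ _) _.
- by move=> s; rewrite /all_full; case: ifP; lra.
- move=> s /few_full; rewrite /all_full; case: (boolP [forall t : 'I_M, _]); last lra.
  move=> /forallP all_t; rewrite /full_rounds (eq_bigr (fun _ => 1%nat)) => [|t _]; last first.
    by rewrite all_t.
  by rewrite sum1_card card_ord ltnn.
have split_mass : \big[Rplus/0]_(s : Omega adj M) (weight p s * (1 - all_full s))
                  + \big[Rplus/0]_(s : Omega adj M) (weight p s * all_full s)
                  = \big[Rplus/0]_(s : Omega adj M) weight p s.
  by rewrite -big_split; apply: eq_bigr => s _ /=; ring.
by move: split_mass; rewrite total_weight expect_all_full; lra.
Qed.

Lemma tail_generating (A : pred (Omega adj M)) (a z : R) :
  0 < z < 1 -> (forall s, A s -> INR (full_rounds s M) < a) ->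
  Prob p A <= (q * z + (1 - q)) ^ M * / Rpower z a.
Proof.
move=> z_range few_full.
have ln_z : ln z < 0 by rewrite -ln_1; apply: ln_increasing; lra.
apply: Rle_trans (Prob_le_expect (g := fun s => Rpower z (INR (full_rounds s M) - a)) _ _) _.
- by move=> s; apply: Rlt_le; apply: exp_pos.
- move=> s /few_full K_lt; rewrite /Rpower.
  by have := exp_ineq1_le ((INR (full_rounds s M) - a) * ln z); nra.
rewrite -expect_pow_full_rounds big_distrl; right; apply: eq_bigr => s _ /=.
by rewrite /Rminus Rpower_plus Rpower_Ropp Rpower_pow; lra.
Qed.

End Erasures.

Lemma ln_div (x y : R) : 0 < x -> 0 < y -> ln (x / y) = ln x - ln y.
Proof. by move=> x_pos y_pos; rewrite ln_mult ?ln_Rinv //; apply: Rinv_0_lt_compat. Qed.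

(* At the optimal tilt [z = a(1-q) / ((1-a)q)] the exponential Markov bound
   equals the Chernoff bound [2^{-M D(a,q)}]. *)
Lemma chernoff_tilt (a q : R) (M : nat) : 0 < a < q -> q < 1 ->
  let z := a * (1 - q) / ((1 - a) * q) in
  (q * z + (1 - q)) ^ M * / Rpower z (a * INR M)
  = Rpower 2 (- INR M * (a * log2 (a / q) + (1 - a) * log2 ((1 - a) / (1 - q)))).
Proof.
move=> a_range q_lt1 z.
have ln2_pos : 0 < ln 2 by have := ln_lt_2; lra.
have mean : q * z + (1 - q) = (1 - q) / (1 - a) by rewrite /z; field; lra.
rewrite mean -Rpower_pow; last by apply: Rdiv_lt_0_compat; lra.
rewrite /Rpower -exp_Ropp -exp_plus /z /log2; congr exp.
rewrite !ln_div; try (apply: Rmult_lt_0_compat || apply: Rdiv_lt_0_compat); try lra.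
by rewrite !ln_mult; try lra; field; lra.
Qed.

Lemma kl_term_self (a : R) : kl_term a a = Some 0.
Proof.
rewrite /kl_term; case: (Req_dec_T a 0) => [//|a_ne0].
by rewrite /Rdiv Rinv_r // /log2 ln_1; congr Some; field; have := ln_lt_2; lra.
Qed.

Lemma kl_term_regular (a b : R) : a <> 0 -> b <> 0 -> kl_term a b = Some (a * log2 (a / b)).
Proof. by rewrite /kl_term => a_ne0 b_ne0; case: (Req_dec_T a 0); case: (Req_dec_T b 0). Qed.

Lemma kl_term_singular (a : R) : a <> 0 -> kl_term a 0 = None.
Proof. by rewrite /kl_term => a_ne0; case: (Req_dec_T a 0); case: (Req_dec_T 0 0). Qed.

Lemma chernoff_bound_ge0 (N M : nat) (D : option R) : 0 <= chernoff_bound N M D.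
Proof.
case: D => [d|] /=; last lra.
by apply: Rmult_le_pos; [exact: pos_INR | apply: Rlt_le; exact: exp_pos].
Qed.

Lemma chernoff_bound_le_N (N M : nat) (D : option R) :
  (1 <= N)%nat -> chernoff_bound 1 M D <= chernoff_bound N M D.
Proof.
move=> /leP /le_INR N_ge1; case: D => [d|] /=; last lra.
by apply: Rmult_le_compat_r; [apply: Rlt_le; exact: exp_pos | exact: N_ge1].
Qed.

Lemma full_rounds_chernoff (T : finType) (adj : rel T) (p a : R) (M : nat)
    (A : pred (Omega adj M)) :
  let q := (1 - p) ^ nedges adj in
  0 <= p <= 1 -> 0 < a < q -> q < 1 ->
  (forall s, A s -> INR (full_rounds s M) < a * INR M) ->
  Prob p A <= Rpower 2 (- INR M * (a * log2 (a / q) + (1 - a) * log2 ((1 - a) / (1 - q)))).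
Proof.
move=> q [p_ge0 p_le1] a_range q_lt1 few_full.
rewrite -chernoff_tilt //; apply: tail_generating => //; split.
  by apply: Rdiv_lt_0_compat; nra.
by apply: (Rmult_lt_reg_r ((1 - a) * q)); [nra | rewrite /Rdiv Rmult_assoc Rinv_l; nra].
Qed.

(* Chernoff bound for the number of full rounds, a Binomial(M, q) variable
   with [q = (1-p)^|E|]; the degenerate cases [a = q] (trivial bound),
   [a = 0] (empty event) and [q = 1] (all rounds full almost surely) are
   settled before the generic one. *)
Lemma full_rounds_tail (T : finType) (adj : rel T) (p a : R) (M : nat)
    (A : pred (Omega adj M)) :
  0 <= p <= 1 -> 0 <= a <= (1 - p) ^ nedges adj ->
  (forall s, A s -> INR (full_rounds s M) < a * INR M) ->
  Prob p A <= chernoff_bound 1 M (KL a ((1 - p) ^ nedges adj)).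
Proof.
move=> [p_ge0 p_le1] [a_ge0 a_le_q] few_full.
have q_le1 : (1 - p) ^ nedges adj <= 1.
  by rewrite -[X in _ <= X](pow1 (nedges adj)); apply: pow_incr; lra.
have [a_eq_q | a_ne_q] := Req_dec a ((1 - p) ^ nedges adj).
  rewrite a_eq_q /KL kl_term_self kl_term_self /= Rplus_0_r Rmult_0_r Rpower_O ?Rmult_1_r;
    [exact: tail_le_one | lra].
have a_lt_q : a < (1 - p) ^ nedges adj by case: (Rle_lt_or_eq_dec _ _ a_le_q).
have [a_eq0 | a_ne0] := Req_dec a 0.
  apply: (Rle_trans _ 0); last exact: chernoff_bound_ge0.
  apply: Rle_trans (Prob_le_expect p_ge0 p_le1 (g := fun _ => 0) _ _) _ => [s|s /few_full|].
  - lra.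
  - by rewrite a_eq0 Rmult_0_l; have := pos_INR (full_rounds s M); lra.
  by rewrite big1 => [|s _]; [apply: Rle_refl | rewrite Rmult_0_r].
have a_pos : 0 < a by case: (Rle_lt_or_eq_dec _ _ a_ge0) => // a_eq0; case: a_ne0.
have [q_eq1 | q_ne1] := Req_dec ((1 - p) ^ nedges adj) 1.
  have KL_infinite : KL a 1 = None.
    by rewrite /KL Rminus_diag kl_term_singular; [case: kl_term | lra].
  rewrite q_eq1 KL_infinite /=; rewrite q_eq1 in a_lt_q.
  have := tail_all_full p_ge0 p_le1 (A := A); rewrite q_eq1 pow1 Rminus_diag; apply.
  move=> s /few_full K_lt; apply/ltP; apply: INR_lt; have := pos_INR M; nra.
have q_lt1 : (1 - p) ^ nedges adj < 1 by case: (Rle_lt_or_eq_dec _ _ q_le1).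
rewrite /KL !kl_term_regular /=; try lra.
by rewrite Rmult_1_l; apply: full_rounds_chernoff.
Qed.

Lemma connected_has_neighbour (T : finType) (adj : rel T) :
  (forall x y : T, connect adj x y) -> (1 < #|T|)%nat -> forall v, exists u, adj v u.
Proof.
move=> adj_conn two_vertices v.
have [w w_ne_v] : exists w, w != v.
  move: two_vertices; rewrite (cardD1 v) inE add1n ltnS => /card_gt0P [w].
  by rewrite inE => /andP [w_ne_v _]; exists w.
case/connectP: (adj_conn v w) => -[|u path_vw] /=.
  by move=> _ w_eq; rewrite w_eq eqxx in w_ne_v.
by case/andP => adj_vu _ _; exists u.
Qed.

Local Close Scope R_scope.

Theorem theorem2 (T : finType) (adj : rel T)
  (adj_sym : symmetric adj) (adj_irr : irreflexive adj)
  (adj_conn : forall x y : T, connect adj x y) (two_vertices : 1 < #|T|)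
  (p : R) (hp0 : (0 <= p)%R) (hp1 : (p <= 1)%R)
  (R' : R) (hR0 : (0 <= R')%R) (hR1 : (R' <= (1 - p) ^ nedges adj)%R)
  (M : nat) (hM : 1 <= M) :
  (@Prob T adj p M
     (fun s : Omega adj M =>
        if Rlt_dec (IZR (min_nv s M)) (R' * INR M) then true else false)
   <= chernoff_bound #|T| M (KL R' ((1 - p) ^ nedges adj)))%R.
Proof.
have has_nbr := connected_has_neighbour adj_conn two_vertices.
have [v0 _] : exists v0 : T, v0 \in T by apply/card_gt0P; apply: ltnW.
apply: Rle_trans (chernoff_bound_le_N _ _ (ltnW two_vertices)).
apply: full_rounds_tail => // s; case: Rlt_dec => // few_iterations _.
have := full_rounds_le_min_nv (s := s) adj_sym has_nbr v0.
by move/IZR_le; rewrite -INR_IZR_INZ; lra.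
Qed.
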